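(* Let $k$ be a positive integer and let $G$ be a $3$-graph with $\lambda(G)>\lambda(K_{k+1}^3)$, and let $\vec x$ be an optimal weight vector of $G$. Then for every $v\in V(G)$, its weight satisfies $x_v<1-\frac{\sqrt{k(k-1)}}{k+1}$.
   Context: For a $3$-graph $G$ on vertex set $[n]$ and $\vec x\in\Delta=\{\vec x\in[0,1]^n:\sum_i x_i=1\}$, put $\lambda(G,\vec x)=\sum_{e\in E(G)}\prod_{i\in e}x_i$ and $\lambda(G)=\max_{\vec x\in\Delta}\lambda(G,\vec x)$ (the Lagrangian). A vector $\vec x\in\Delta$ with $\lambda(G,\vec x)=\lambda(G)$ is an optimal weight vector, and $x_v$ is the weight of vertex $v$. $K_m^3$ is the complete $3$-graph on $m$ vertices. *)

From HB Require Import structures.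
From mathcomp Require Import all_boot all_order all_algebra.
From mathcomp Require Import classical_sets reals.
Unset Printing Implicit Defensive.
Import Order.TTheory GRing.Theory Num.Theory.
Local Open Scope ring_scope.
Local Open Scope classical_set_scope.

Definition is_3graph (n : nat) (G : {set {set 'I_n}}) : Prop :=
  forall e, e \in G -> #|e| = 3%N.

Definition simplex (R : realType) (n : nat) : set ('I_n -> R) :=
  [set x | (forall i, 0 <= x i <= 1) /\ \sum_(i < n) x i = 1].

Definition lagr_at (R : realType) (n : nat) (G : {set {set 'I_n}}) (x : 'I_n -> R) : R :=
  \sum_(e in G) \prod_(i in e) x i.

(* lambda(G) = max over the simplex, written as the supremum (attained by compactness). *)
Definition lagrangian (R : realType) (n : nat) (G : {set {set 'I_n}}) : R :=
  sup [set lagr_at R n G x | x in simplex R n].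

Definition K3 (m : nat) : {set {set 'I_m}} := [set e : {set 'I_m} | #|e| == 3%N].

Definition optimal_weight (R : realType) (n : nat) (G : {set {set 'I_n}}) (x : 'I_n -> R) : Prop :=
  simplex R n x /\ lagr_at R n G x = lagrangian R n G.

From HB Require Import structures.
From mathcomp Require Import all_boot all_order all_algebra.
From mathcomp Require Import classical_sets reals.
From mathcomp Require Import ring lra zify.
Import Order.TTheory GRing.Theory Num.Theory.
Local Open Scope ring_scope.

(* Write lambda(G, x) = x_v * L + D, where L is the Lagrangian polynomial of
   the link of v and D collects the edges avoiding v.  Scaling the weights
   off v by c and giving the rest of the mass to v yields c^2 L + c^3 (lambda - L),
   so optimality of x forces the first-order condition 3 lambda(G) <= L when
   x_v > 0.  Since the link is a 2-graph on the other vertices,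
   2 L <= (1 - x_v)^2.  If x_v >= 1 - sqrt(k(k-1))/(k+1) this gives
   6 lambda(G) <= k(k-1)/(k+1)^2 = 6 C(k+1,3)/(k+1)^3 <= 6 lambda(K_{k+1}^3). *)

Lemma sum_pairs_card2 (R : comPzRingType) (T : finType) (S : {set T}) (x : T -> R) :
  #|S| = 2%N ->
  \sum_(p : T * T | (p.1 != p.2) && ([set p.1; p.2] == S)) x p.1 * x p.2 =
  2 * \prod_(i in S) x i.
Proof.
move=> /eqP/cards2P[a [b [ab ->]]].
rewrite (eq_bigl (mem [set (a, b); (b, a)])) => [|[p q] /=]; last first.
  rewrite !inE !xpair_eqE; apply/andP/idP => [[pq /eqP E] | ].
    move: pq.
    have : p \in [set a; b] by rewrite -E !inE eqxx.
    have : q \in [set a; b] by rewrite -E !inE eqxx orbT.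
    rewrite !inE => /orP[]/eqP-> /orP[]/eqP->;
    by rewrite ?eqxx ?andbT ?orbT.
  case/orP=> /andP[/eqP-> /eqP->]; first by rewrite ab.
  by rewrite eq_sym ab finset.setUC.
rewrite big_setU1 ?big_set1 ?inE ?xpair_eqE ?negb_and ?ab //=.
by rewrite big_setU1 ?big_set1 ?inE //= mulrC mulr2n mulrDl mul1r.
Qed.

Lemma sum_card2_le_sqr (R : numDomainType) (T : finType) (L : {set {set T}}) (A : {set T})
    (x : T -> R) :
  (forall S, S \in L -> #|S| = 2%N /\ S \subset A) -> (forall i, 0 <= x i) ->
  2 * \sum_(S in L) \prod_(i in S) x i <= (\sum_(i in A) x i) ^+ 2.
Proof.
move=> L2 x0.
pose pset (p : T * T) := [set p.1; p.2].
pose inL p := (p.1 != p.2) && (pset p \in L).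
have -> : 2 * \sum_(S in L) \prod_(i in S) x i = \sum_(p | inL p) x p.1 * x p.2.
  rewrite mulr_sumr (partition_big pset (mem L)) => [|p /andP[]//].
  apply: eq_bigr => S SL; rewrite -sum_pairs_card2; last by case: (L2 S SL).
  apply: eq_bigl => p; rewrite /inL /pset -andbA.
  by case: ([set p.1; p.2] =P S) => [->|]; rewrite ?SL ?andbF.
have inLA p : (p.1 \in A) && (p.2 \in A) && inL p = inL p.
  apply/andb_idl => /andP[_ /L2[_ /fintype.subsetP sA]].
  by rewrite !sA // !inE eqxx ?orbT.
rewrite expr2 big_distrlr pair_big /= [X in _ <= X](bigID inL) /=.
rewrite (eq_bigl inL _ inLA).
by rewrite lerDl sumr_ge0 // => p _; rewrite mulr_ge0.
Qed.

Section VertexLink.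
Context {R : realType} {n : nat} (G : {set {set 'I_n}}).

Definition lagr_link (v : 'I_n) (x : 'I_n -> R) : R :=
  \sum_(e in G | v \in e) \prod_(i in e :\ v) x i.

Definition lagr_del (v : 'I_n) (x : 'I_n -> R) : R :=
  \sum_(e in G | v \notin e) \prod_(i in e) x i.

Lemma lagr_at_split v x : lagr_at R n G x = x v * lagr_link v x + lagr_del v x.
Proof.
rewrite /lagr_at (bigID (fun e : {set _} => v \in e)) /= mulr_sumr; congr (_ + _).
by apply: eq_bigr => e /andP[_ ve]; rewrite (big_setD1 v).
Qed.

Definition scale_off (v : 'I_n) (c : R) (x : 'I_n -> R) : 'I_n -> R :=
  fun i => if i == v then 1 - c * (1 - x v) else c * x i.

Lemma simplex_sum_off v x : simplex R n x -> \sum_(i | i != v) x i = 1 - x v.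
Proof. by move=> [_ x1]; rewrite -x1 [in RHS](bigD1 v) //= addrAC subrr add0r. Qed.

Lemma simplex_scale_off v c x :
  simplex R n x -> 0 <= c -> c * (1 - x v) <= 1 -> simplex R n (scale_off v c x).
Proof.
move=> xS c0 cxv; have [x01 _] := xS; have xi0 i : 0 <= x i by case/andP: (x01 i).
have x_off i : i != v -> x i <= 1 - x v.
  by move=> iv; rewrite -(simplex_sum_off v x xS) (bigD1 i) //= lerDl sumr_ge0.
split=> [i|].
  rewrite /scale_off; case: eqP => [_|/eqP iv]; apply/andP.
    by case/andP: (x01 v) => _ xv1; split; nra.
  by have := x_off i iv; have := xi0 i; split; nra.
rewrite (bigD1 v) //= /scale_off eqxx (eq_bigr (fun i => c * x i)) => [|i /negbTE -> //].
by rewrite -mulr_sumr simplex_sum_off // subrK.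
Qed.

Hypothesis G3 : is_3graph n G.

Lemma lagr_link_scale_off v c x :
  lagr_link v (scale_off v c x) = c ^+ 2 * lagr_link v x.
Proof.
rewrite /lagr_link mulr_sumr; apply: eq_bigr => e /andP[eG ve].
rewrite (eq_bigr (fun i => c * x i)) => [|i]; last first.
  by rewrite in_setD1 /scale_off => /andP[/negbTE ->].
by rewrite prodrMl; move: (cardsD1 v e); rewrite ve G3 // add1n => -[<-].
Qed.

Lemma lagr_del_scale_off v c x :
  lagr_del v (scale_off v c x) = c ^+ 3 * lagr_del v x.
Proof.
rewrite /lagr_del mulr_sumr; apply: eq_bigr => e /andP[eG ve].
rewrite (eq_bigr (fun i => c * x i)) => [|i ie]; last first.
  by rewrite /scale_off ifN //; apply: contraNneq ve => <-.
by rewrite prodrMl G3.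
Qed.

Lemma lagr_at_scale_off v c x :
  lagr_at R n G (scale_off v c x) =
  c ^+ 2 * lagr_link v x + c ^+ 3 * (lagr_at R n G x - lagr_link v x).
Proof.
rewrite !(lagr_at_split v) lagr_link_scale_off lagr_del_scale_off /scale_off eqxx.
ring.
Qed.

Lemma lagr_link_le_sqr v x : simplex R n x -> 2 * lagr_link v x <= (1 - x v) ^+ 2.
Proof.
move=> xS.
have -> : lagr_link v x =
    \sum_(S in [set e :\ v | e in [set e in G | v \in e]]) \prod_(i in S) x i.
  rewrite big_imset /=; first by apply: eq_bigl => e; rewrite inE.
  move=> e1 e2; rewrite !inE => /andP[_ v1] /andP[_ v2] E.
  by rewrite -(finset.setD1K v1) -(finset.setD1K v2) E.
have -> : 1 - x v = \sum_(i in [set~ v]) x i.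
  by rewrite -(simplex_sum_off v x xS); apply: eq_bigl => i; rewrite !inE.
apply: sum_card2_le_sqr => [S /imsetP[e] | i]; last by case/andP: (xS.1 i).
rewrite inE => /andP[eG ve] ->; split.
  by move: (cardsD1 v e); rewrite ve G3 // add1n => -[].
by apply/fintype.subsetP => i; rewrite !inE => /andP[].
Qed.

End VertexLink.

Lemma lagr_at_le_lagrangian {R : realType} {n} (G : {set {set 'I_n}}) x :
  simplex R n x -> lagr_at R n G x <= lagrangian R n G.
Proof.
move=> xS; apply: ub_le_sup; last by exists x.
exists #|G|%:R => _ [y [y01 _] <-].
rewrite /lagr_at -sumr_const; apply: ler_sum => e _.
by apply: prodr_ile1 => i _; apply: y01.
Qed.

Lemma le0_of_quadratic_near0 (R : realFieldType) (a b c d : R) :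
  0 < d -> (forall h, 0 < h <= d -> a + h * b + h ^+ 2 * c <= 0) -> a <= 0.
Proof.
move=> d0 Hh; rewrite leNgt; apply/negP => a0.
pose M := `|b| + `|c| + 1; have M0 : 0 < M.
  by rewrite /M; have := normr_ge0 b; have := normr_ge0 c; lra.
pose h := Num.min d (Num.min 1 (a / (2 * M))).
have hd : h <= d by rewrite /h ge_min lexx.
have h1 : h <= 1 by rewrite /h !ge_min lexx orbT.
have hM : h * (2 * M) <= a by rewrite -ler_pdivlMr ?pmulr_rgt0 // /h !ge_min lexx !orbT.
have h0 : 0 < h by rewrite /h !lt_min d0 ltr01 divr_gt0 ?pmulr_rgt0.
have hb : - (h * `|b|) <= h * b by rewrite -mulrN ler_pM2l // lerNnormlW.
have hc : - (h * `|c|) <= h ^+ 2 * c.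
  have := lerNnormlW (lexx `|c|); have := normr_ge0 c.
  have : h * h <= h by nra.
  by rewrite expr2; nra.
by have := Hh h; rewrite h0 hd /= => /(_ isT); rewrite /M in hM; nra.
Qed.

Lemma optimal_link_ge {R : realType} {n} {G : {set {set 'I_n}}} {x : 'I_n -> R} v :
  is_3graph n G -> optimal_weight R n G x -> 0 < x v ->
  3 * lagrangian R n G <= lagr_link G v x.
Proof.
move=> G3 [xS xopt] xv0; rewrite -subr_le0.
set L := lagrangian R n G; set B := lagr_link G v x.
apply: (@le0_of_quadratic_near0 _ _ (3 * L - 2 * B) (L - B) (x v)) => // h /andP[h0 hxv].
have xv1 : x v <= 1 by case/andP: (xS.1 v).
have sS : simplex R n (scale_off v (1 + h) x) by apply: simplex_scale_off => //; nra.
have := lagr_at_le_lagrangian G _ sS; rewrite lagr_at_scale_off // xopt -/L -/B.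
have -> : (1 + h) ^+ 2 * B + (1 + h) ^+ 3 * (L - B) =
  L + h * (3 * L - B + h * (3 * L - 2 * B) + h ^+ 2 * (L - B)) by ring.
by rewrite gerDl pmulr_rle0.
Qed.

Lemma bin3_mul6 m : ('C(m.+1, 3) * 6 = m.+1 * (m * (m - 1)))%N.
Proof. by rewrite (_ : 6 = 3`!)%N // bin_ffact !ffactnS ffactn0 subn1 muln1. Qed.

Lemma simplex_uniform (R : realType) m : simplex R m.+1 (fun=> (m.+1)%:R^-1).
Proof.
split; last by rewrite sumr_const card_ord -[_ *+ _]mulr_natr mulVf ?pnatr_eq0.
by move=> i; rewrite invr_ge0 ler0n invf_le1 ?ler1n ?ltr0Sn.
Qed.

Lemma lagr_at_K3_uniform (R : realType) m :
  lagr_at R m (K3 m) (fun=> m%:R^-1) = 'C(m, 3)%:R / m%:R ^+ 3.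
Proof.
rewrite /lagr_at (eq_bigr (fun=> m%:R^-1 ^+ 3)) => [|e]; last first.
  by rewrite inE => /eqP e3; rewrite prodr_const e3.
by rewrite sumr_const card_draws card_ord exprVn mulr_natl.
Qed.

Lemma lagrangian_K3_ge (R : realType) k :
  (k * (k - 1))%:R / (k.+1)%:R ^+ 2 <= 6 * lagrangian R k.+1 (K3 k.+1) :> R.
Proof.
have bin : 'C(k.+1, 3)%:R * 6 = (k.+1)%:R * (k * (k - 1))%:R :> R.
  by rewrite -!natrM bin3_mul6.
have -> : (k * (k - 1))%:R / (k.+1)%:R ^+ 2 =
    6 * lagr_at R k.+1 (K3 k.+1) (fun=> (k.+1)%:R^-1).
  rewrite lagr_at_K3_uniform mulrA (mulrC 6) bin.
  by field; rewrite -mulrS pnatr_eq0.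
by rewrite ler_pM2l //; apply/lagr_at_le_lagrangian/simplex_uniform.
Qed.

Theorem claim3p1 (R : realType) (n k : nat) (G : {set {set 'I_n}}) (x : 'I_n -> R) :
  (0 < k)%N ->
  is_3graph n G ->
  lagrangian R k.+1 (K3 k.+1) < lagrangian R n G ->
  optimal_weight R n G x ->
  forall v : 'I_n, x v < 1 - Num.sqrt ((k * (k - 1))%:R) / (k.+1)%:R.
Proof.
move=> _ G3 ltKG opt v; rewrite ltNge; apply/negP => xv_ge.
set m : R := (k * (k - 1))%:R in xv_ge *; set K : R := (k.+1)%:R in xv_ge *.
have K0 : 0 < K by rewrite ltr0Sn.
have sqrt_lt : Num.sqrt m < K.
  rewrite -[K in _ < K]ger0_norm ?ltW // -sqrtr_sqr ltr_sqrt ?exprn_gt0 //.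
  by rewrite /m /K -natrX ltr_nat; nia.
set s := Num.sqrt m / K in xv_ge.
have s_lt1 : s < 1 by rewrite ltr_pdivrMr ?mul1r.
have xv1 : x v <= 1 by case/andP: (opt.1.1 v).
have s0 : 0 <= s by rewrite divr_ge0 ?sqrtr_ge0 ?ltW.
have sqr_le : (1 - x v) ^+ 2 <= m / K ^+ 2.
  rewrite -[m]sqr_sqrtr ?ler0n // -expr_div_n -/s.
  by rewrite ler_pXn2r ?nnegrE ?subr_ge0 //; lra.
have xv0 : 0 < x v by lra.
have := optimal_link_ge v G3 opt xv0; have := lagr_link_le_sqr _ G3 v _ opt.1.
have := lagrangian_K3_ge R k; rewrite -/m -/K.
move: sqr_le; set q := m / K ^+ 2; lra.
Qed.
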